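(* Suppose that $1/n\ll \eta\ll \zeta,1/r,1/k$. Suppose $F$ is an allocation such that for every $j\in[r]$ there exists $f\in F$ with $f^{-1}(j)\neq\emptyset$. Let $\mathcal{P}$ be a partition of a set $V$ into parts $V_1,\dots,V_r$, each of size $n$, and let $J$ be a $\mathcal{P}F$-partite $k$-complex on $V$ satisfying $\delta^F(J)\ge (n,\zeta n,\dots,\zeta n)$. Then for every $j\in[r]$ and every $v\in V_j$, $$|\tilde N_{\eta,1}(v,J_k)\cap V_j|\ge \delta^F_{k-1}(J)-\sqrt{\eta}\,n.$$
   Context: Hierarchy convention: ''$a\ll b$'' means that for every $b>0$ there is $a_0>0$ such that the statement holds for all $0<a\le a_0$; longer hierarchies are read analogously. A $k$-complex is a hypergraph $J$ in which every edge has at most $k$ vertices and every subset of an edge is an edge; $J_i$ is the set of edges of size exactly $i$. Allocations: an allocation function is a map $f:[k]\to[r]$, with index vector $\mathbf{i}(f)=(|f^{-1}(1)|,\dots,|f^{-1}(r)|)$. Given a multiset $I$ of $k$-vectors in $\mathbb{Z}^r$ (nonnegative integer vectors with coordinate sum $k$), an allocation $F$ is the multiset obtained by choosing, for each $\mathbf{i}\in I$ (with repetition), some $f$ with $\mathbf{i}(f)=\mathbf{i}$ and including all $k!$ functions $f\circ\sigma$, $\sigma\in\mathrm{Sym}_k$ (with repetition). $J$ on $V=V_1\cup\dots\cup V_r$ is $\mathcal{P}F$-partite if for every $j\in[k]$ and $e\in J_j$ there is $f\in F$ with $e=\{v_1,\dots,v_j\}$ and $v_i\in V_{f(i)}$ for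 all $i\in[j]$. For $f\in F$ and $0\le j\le k-1$, $\delta^f_j(J)$ is the largest $m$ such that for every edge $\{v_1,\dots,v_j\}\in J$ with $v_i\in V_{f(i)}$ there are at least $m$ vertices $v_{j+1}\in V_{f(j+1)}$ with $\{v_1,\dots,v_{j+1}\}\in J$; $\delta^F_j(J)=\min_{f\in F}\delta^f_j(J)$, $\delta^F(J)=(\delta^F_0(J),\dots,\delta^F_{k-1}(J))$, compared coordinatewise. Reachability: for a $k$-graph $H$ on $N$ vertices, two vertices $u,w$ are $(\beta,i)$-reachable in $H$ if there are at least $\beta N^{ik-1}$ sets $S$ of size $ik-1$ such that both $H[S\cup\{u\}]$ and $H[S\cup\{w\}]$ have perfect matchings. With respect to the partition $\mathcal{P}$, $\tilde N_{\beta,i}(v,H)$ denotes the set of vertices in the same part of $\mathcal{P}$ as $v$ that are $(\beta,i)$-reachable to $v$ in $H$. Here $H=J_k$ and $N=rn$. *)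

From Stdlib Require Import Reals.
From mathcomp Require Import all_boot all_order all_fingroup.
Unset Printing Implicit Defensive.

Section Defs.
Variables (r n k : nat).

(* Vertex set V = V_1 u ... u V_r, each part of size n: vertex (j, x) lies in
   part V_j. *)
Definition vtx := ('I_r * 'I_n)%type.
Definition part (v : vtx) : 'I_r := v.1.

(* allocation functions [k] -> [r] (0-indexed) *)
Definition allocfun := {ffun 'I_k -> 'I_r}.

(* F (as a set; multiplicities are irrelevant for all notions used) is an
   allocation: the union, over a family of chosen functions g, of all
   g \o sigma, sigma in Sym_k. *)
Definition is_allocation (F : {set allocfun}) : Prop :=
  exists gs : seq allocfun,
    F = \bigcup_(g <- gs) [set [ffun x => g (s x)] | s : 'S_k].

Definition is_kcomplex (J : {set {set vtx}}) : Prop :=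
  (forall e, e \in J -> #|e| <= k) /\
  (forall e e' : {set vtx}, e \in J -> e' \subset e -> e' \in J).

Definition is_PF_partite (F : {set allocfun}) (J : {set {set vtx}}) : Prop :=
  forall e, e \in J -> 1 <= #|e| <= k ->
    exists2 f, f \in F &
      exists v : {ffun 'I_k -> vtx},
        e = [set v i | i : 'I_k & i < #|e|] /\
        (forall i : 'I_k, i < #|e| -> part (v i) = f i).

Definition tset (j : nat) (v : {ffun 'I_j -> vtx}) : {set vtx} :=
  [set v i | i : 'I_j].

Definition f_tuple (J : {set {set vtx}}) (f : allocfun) (j : 'I_k)
    (v : {ffun 'I_j -> vtx}) : bool :=
  injectiveb v && (tset j v \in J) &&
  [forall i : 'I_j, part (v i) == f (widen_ord (ltnW (ltn_ord j)) i)].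

Definition ext_deg (J : {set {set vtx}}) (f : allocfun) (j : 'I_k)
    (v : {ffun 'I_j -> vtx}) : nat :=
  #|[set w : vtx | (part w == f j) && (w \notin tset j v) && (w |: tset j v \in J)]|.

(* delta^f_j(J): minimum of ext_deg over all such ordered edges (each value is
   at most #|V|, so the neutral element #|V| is harmless); convention 0 if
   there is no such edge. *)
Definition delta_f (J : {set {set vtx}}) (f : allocfun) (j : 'I_k) : nat :=
  if [exists v, f_tuple J f j v]
  then \big[minn/#|[set: vtx]|]_(v | f_tuple J f j v) ext_deg J f j v
  else 0.

Definition delta_F (F : {set allocfun}) (J : {set {set vtx}}) (j : 'I_k) : nat :=
  \big[minn/#|[set: vtx]|]_(f in F) delta_f J f j.

Definition top_edges (J : {set {set vtx}}) : {set {set vtx}} :=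
  [set e in J | #|e| == k].

Definition has_pm (H : {set {set vtx}}) (X : {set vtx}) : bool :=
  [exists M : {set {set vtx}}, (M \subset H) && trivIset M && (cover M == X)].

Definition reach_count (H : {set {set vtx}}) (i : nat) (u w : vtx) : nat :=
  #|[set S : {set vtx} | (#|S| == i * k - 1) && has_pm H (u |: S)
                                               && has_pm H (w |: S)]|.

Definition reachable (H : {set {set vtx}}) (beta : R) (i : nat) (u w : vtx) : bool :=
  if Rle_dec (Rmult beta (pow (INR #|[set: vtx]|) (i * k - 1)))
             (INR (reach_count H i u w)) then true else false.

Definition tildeN (H : {set {set vtx}}) (beta : R) (i : nat) (v : vtx) : {set vtx} :=
  [set w : vtx | (part w == part v) &&
                 reachable H beta i v w ].
End Defs.

From Stdlib Require Import Reals Lra Psatz.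
From mathcomp Require Import all_boot all_order all_fingroup.

(* Fix v in V_j and an allocation f in F with f(1) = j.  As delta_0 = n, {v}
   is an edge, and extending ordered edges from v one vertex at a time along f
   yields T >= (zeta n)^(k-1) ordered (k-1)-tuples t with t + v in J_k.  For
   each such t, reordering the edge t + v so that v comes last shows that at
   least delta_(k-1) vertices w of V_j have t + w in J_k.  Double count the
   pairs (t, w): if w is not (eta,1)-reachable from v, fewer than
   eta (rn)^(k-1) sets S of size k-1 have S + v, S + w in J_k, so w accounts
   for at most (k-1)^(k-1) eta (rn)^(k-1) tuples.  Hence
   T delta_(k-1) <= T |tildeN(v) cap V_j| + n (k-1)^(k-1) eta (rn)^(k-1),
   and the loss is at most sqrt(eta) n once eta <= (zeta/(rk))^(2(k-1)),
   whatever n is. *)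

Set Implicit Arguments.
Unset Strict Implicit.

Lemma INR_expn a b : INR (a ^ b) = pow (INR a) b.
Proof. by elim: b => [|b IH] //; rewrite expnS mult_INR IH. Qed.

Section RealBounds.
Local Open Scope R_scope.

Lemma sub_le_of_mul_le (T d A E s : R) :
  0 < T -> T * d <= A * T + E -> E <= s * T -> d - s <= A.
Proof. by move=> T0 hd hE; apply: (Rmult_le_reg_l T) => //; nra. Qed.

Lemma nonreachable_mass_le (zeta eta n x y b T : R) (K : nat) :
  0 < x -> 0 < y -> 0 <= n -> 0 <= eta -> 0 <= b <= y ^ K -> (zeta * n) ^ K <= T ->
  sqrt eta <= (zeta / (x * y)) ^ K ->
  n * (b * (eta * (x * n) ^ K)) <= sqrt eta * n * T.
Proof.
move=> x0 y0 n0 eta0 [b0 hb] hT hs.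
have s0 := sqrt_pos eta.
have xy0 : 0 < x * y by apply: Rmult_lt_0_compat.
have xyK0 : 0 < (x * y) ^ K by apply: pow_lt.
have key : sqrt eta * (x * y) ^ K <= zeta ^ K.
  have -> : zeta ^ K = (zeta / (x * y)) ^ K * (x * y) ^ K.
    by rewrite -Rpow_mult_distr /Rdiv Rmult_assoc Rinv_l ?Rmult_1_r //; lra.
  exact: Rmult_le_compat_r (Rlt_le _ _ xyK0) hs.
have mass0 : 0 <= eta * (x * n) ^ K.
  by apply/Rmult_le_pos/pow_le/Rmult_le_pos => //; apply: Rlt_le.
apply: (Rle_trans _ (n * (y ^ K * (eta * (x * n) ^ K)))).
  by apply: Rmult_le_compat_l => //; apply: Rmult_le_compat_r.
have -> : n * (y ^ K * (eta * (x * n) ^ K)) =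
          sqrt eta * n * (sqrt eta * (x * y) ^ K * n ^ K).
  by rewrite -{1}(sqrt_sqrt eta eta0) !Rpow_mult_distr; ring.
apply: Rmult_le_compat_l; first exact: Rmult_le_pos.
apply: (Rle_trans _ _ _ _ hT); rewrite [(zeta * n) ^ K]Rpow_mult_distr.
by apply: Rmult_le_compat_r key; apply: pow_le.
Qed.

End RealBounds.

Lemma bigminn_le {I : finType} {P : pred I} {F : I -> nat} {x j} :
  P j -> \big[minn/x]_(i | P i) F i <= F j.
Proof. by move=> Pj; rewrite -minEnat; exact: (Order.TotalTheory.bigmin_le_cond x F Pj). Qed.

Lemma card_sum_bool (T : finType) (A : pred T) (c : T -> bool) :
  #|[set x | A x && c x]| = \sum_(x | A x) c x.
Proof. by rewrite -sum1dep_card big_mkcondr /=; apply: eq_bigr => x _; case: (c x). Qed.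

Lemma allocation_perm_closed r k (F : {set allocfun r k}) f (s : 'S_k) :
  is_allocation r k F -> f \in F -> [ffun x => f (s x)] \in F.
Proof.
case=> gs ->; rewrite bigcup_seq => /bigcupP [g gin /imsetP [s0 _ ->]].
apply/bigcupP; exists g => //; apply/imsetP; exists (s * s0)%g => //.
by apply/ffunP => x; rewrite !ffunE permM.
Qed.

Lemma allocation_rooted r K (F : {set allocfun r K.+1}) :
  is_allocation r K.+1 F ->
  (forall j : 'I_r, exists2 f, f \in F & exists i : 'I_K.+1, f i = j) ->
  forall j : 'I_r, exists2 f, f \in F & f ord0 = j.
Proof.
move=> allocF surjF j; have [f fF [i fi]] := surjF j.
exists [ffun x => f (tperm ord0 i x)]; first exact: allocation_perm_closed.
by rewrite ffunE tpermL.
Qed.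

Section Vertices.
Variables r n : nat.
Local Notation V := (vtx r n).
Local Notation part := (part r n).
Local Notation tset := (tset r n).

Lemma card_part c : #|[set w : V | part w == c]| = n.
Proof.
have -> : [set w : V | part w == c] = [set (c, x) | x : 'I_n].
  apply/setP => -[a b]; rewrite inE /part /=.
  by apply/eqP/imsetP => [->|[x _ [-> _]]] //; exists b.
by rewrite card_imset ?card_ord // => x y [].
Qed.

Lemma card_tset j (t : {ffun 'I_j -> V}) : injective t -> #|tset j t| = j.
Proof. by move=> inj; rewrite /tset card_imset // card_ord. Qed.

Definition ffun_rcons m (u : {ffun 'I_m -> V}) (w : V) : {ffun 'I_m.+1 -> V} :=
  [ffun x => if unlift ord_max x is Some y then u y else w].

Definition ffun_belast m (x : {ffun 'I_m.+1 -> V}) : {ffun 'I_m -> V} :=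
  [ffun y => x (lift ord_max y)].
Arguments ffun_belast {m}.

Lemma ffun_rcons_max m (u : {ffun 'I_m -> V}) w : ffun_rcons u w ord_max = w.
Proof. by rewrite ffunE unlift_none. Qed.

Lemma ffun_rcons_lift m (u : {ffun 'I_m -> V}) w y :
  ffun_rcons u w (lift ord_max y) = u y.
Proof. by rewrite ffunE liftK. Qed.

Lemma ffun_rconsK m (w : V) : cancel (@ffun_rcons m ^~ w) ffun_belast.
Proof. by move=> u; apply/ffunP => y; rewrite ffunE ffun_rcons_lift. Qed.

Lemma tset_rcons m (u : {ffun 'I_m -> V}) w :
  tset m.+1 (ffun_rcons u w) = w |: tset m u.
Proof.
apply/setP => z; apply/imsetP/setU1P => [[x _ ->]|[->|/imsetP [y _ ->]]].
- case: (unliftP ord_max x) => [y ->|->]; last by rewrite ffun_rcons_max; left.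
  by rewrite ffun_rcons_lift; right; apply/imsetP; exists y.
- by exists ord_max; rewrite ?ffun_rcons_max.
- by exists (lift ord_max y); rewrite ?ffun_rcons_lift.
Qed.

Lemma ffun_rcons_inj m (u : {ffun 'I_m -> V}) w :
  injective u -> w \notin tset m u -> injective (ffun_rcons u w).
Proof.
move=> ui wn x1 x2.
case: (unliftP ord_max x1) => [y1 ->|->]; case: (unliftP ord_max x2) => [y2 ->|->];
  rewrite ?ffun_rcons_lift ?ffun_rcons_max // => e.
- by rewrite (ui _ _ e).
- by case/negP: wn; rewrite -e; apply/imsetP; exists y1.
- by case/negP: wn; rewrite e; apply/imsetP; exists y2.
Qed.

Section Complex.
Variable K : nat.
Local Notation k := K.+1.
Variables (F : {set allocfun r k}) (J : {set {set V}}).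

Lemma delta_F_le_delta_f f j : f \in F -> delta_F r n k F J j <= delta_f r n k J f j.
Proof. exact: bigminn_le. Qed.

Lemma delta_f_le_ext_deg f j t :
  f_tuple r n k J f j t -> delta_f r n k J f j <= ext_deg r n k J f j t.
Proof.
move=> ft; rewrite /delta_f.
have -> : [exists t, f_tuple r n k J f j t] by apply/existsP; exists t.
exact: bigminn_le.
Qed.

(* delta^f_0 counts the singleton edges inside V_(f 0), a part of size n. *)
Lemma singleton_edge f v :
  n <= delta_f r n k J f ord0 -> part v = f ord0 -> [set v] \in J.
Proof.
move=> hd pv; have n0 : 0 < n by case: v {pv} => _ x; apply: leq_ltn_trans (ltn_ord x).
move: hd; rewrite /delta_f; case: existsP => [[t ft]|_]; last by rewrite leqNgt n0.
move=> hd; have {hd} := leq_trans hd (bigminn_le ft).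
rewrite /ext_deg.
have -> : tset 0 t = set0 by apply/setP => z; rewrite inE; apply/imsetP => -[[]].
set E := [set w | _] => hE.
have : E == [set w : V | part w == f ord0].
  rewrite eqEcard card_part hE andbT; apply/subsetP => w; rewrite !inE.
  by case/andP => /andP [].
by move/eqP/setP/(_ v); rewrite !inE pv eqxx setU0 => /andP [].
Qed.

(* Ordered edges (u_0 = v, ..., u_(m-1)) of J with u_i in V_(f i); [inord] reads
   the position in 'I_k, which is exact as only m <= k occurs. *)
Definition rooted_tuples (f : allocfun r k) (v : V) m : {set {ffun 'I_m -> V}} :=
  [set u : {ffun 'I_m -> V} | [&& injectiveb u, tset m u \in J,
              [forall x, part (u x) == f (inord x)] &
              [forall x : 'I_m, (val x == 0) ==> (u x == v)]]].

Lemma rooted_tuples1_gt0 (f : allocfun r k) (v : V) :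
  part v = f ord0 -> [set v] \in J -> 0 < #|rooted_tuples f v 1|.
Proof.
move=> pv vJ; apply/card_gt0P; exists [ffun _ => v].
have tv : tset 1 [ffun _ : 'I_1 => v] = [set v].
  apply/setP => z; rewrite inE.
  by apply/imsetP/eqP => [[x _ ->]|->]; [rewrite ffunE | exists ord0; rewrite ?ffunE].
rewrite inE tv vJ; apply/and4P; split => //.
- by apply/injectiveP => x y _; rewrite (ord1 x) (ord1 y).
- apply/forallP => x; rewrite ffunE pv (ord1 x); apply/eqP; congr (f _).
  by apply: val_inj; rewrite /= inordK.
- by apply/forallP => x; rewrite ffunE eqxx implybT.
Qed.

Lemma rooted_tuples_succ (f : allocfun r k) (v : V) (j : 'I_k) : 0 < j ->
  #|rooted_tuples f v j| * delta_f r n k J f j <= #|rooted_tuples f v j.+1|.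
Proof.
move=> j0.
rewrite -[#|rooted_tuples f v j.+1|]sum1_card (partition_big ffun_belast predT) //=.
rewrite (bigID (mem (rooted_tuples f v j))) /= -sum_nat_const.
apply: leq_trans (leq_addr _ _); apply: leq_sum => u uP.
move: (uP); rewrite inE => /and4P [/injectiveP ui uJ /forallP up /forallP uv].
have ft : f_tuple r n k J f j u.
  rewrite /f_tuple uJ andbT; apply/andP; split; first exact/injectiveP.
  apply/forallP => x; rewrite (eqP (up x)); apply/eqP; congr (f _); apply: val_inj.
  by rewrite /= inordK // ltnS (leq_trans (ltnW (ltn_ord x))) // -ltnS.
apply: leq_trans (delta_f_le_ext_deg ft) _.
have rinj : injective (ffun_rcons u).
  by move=> w1 w2 e; rewrite -(ffun_rcons_max u w1) e ffun_rcons_max.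
rewrite /ext_deg sum1dep_card -(card_imset _ rinj).
apply: subset_leq_card; apply/subsetP => _ /imsetP [w + ->].
rewrite inE => /andP [/andP [pw wn] wJ].
rewrite inE ffun_rconsK eqxx andbT inE tset_rcons wJ; apply/and4P; split => //.
- exact/injectiveP/ffun_rcons_inj.
- apply/forallP => x; case: (unliftP ord_max x) => [y ->|->].
    rewrite ffun_rcons_lift (eqP (up y)); apply/eqP; congr (f _); apply: val_inj.
    by rewrite /= /bump leqNgt ltn_ord.
  by rewrite ffun_rcons_max (eqP pw) /= inord_val.
- apply/forallP => x; case: (unliftP ord_max x) => [y ->|->].
    by rewrite ffun_rcons_lift /= /bump leqNgt ltn_ord; apply: uv.
  by rewrite /= eqn0Ngt j0.
Qed.

Lemma rooted_tuples_lower_bound (f : allocfun r k) (v : V) (z : R) :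
  part v = f ord0 -> [set v] \in J -> Rle 0 z ->
  (forall j : 'I_k, 0 < j -> Rle z (INR (delta_f r n k J f j))) ->
  forall m, m < k -> Rle (pow z m) (INR #|rooted_tuples f v m.+1|).
Proof.
move=> pv vJ z0 hz; elim => [_|m IH hm].
  by apply: (le_INR 1); apply/leP; apply: rooted_tuples1_gt0.
have /leP/le_INR := @rooted_tuples_succ f v (Ordinal hm) isT.
rewrite mult_INR /= Rmult_comm; apply: Rle_trans.
apply: Rmult_le_compat => //; first exact: pow_le.
- exact: (hz (Ordinal hm)).
- exact: IH (ltnW hm).
Qed.

Definition link_tuples (v : V) :=
  [set t : {ffun 'I_K -> V} |
     [&& injectiveb t, v \notin tset K t & v |: tset K t \in J]].

Definition common_link_tuples (v w : V) :=
  [set t in link_tuples v | (w \notin tset K t) && (w |: tset K t \in J)].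

Lemma rooted_tuples_le_link (f : allocfun r k) (v : V) :
  #|rooted_tuples f v k| <= #|link_tuples v|.
Proof.
pose behead_ffun (x : {ffun 'I_k -> V}) : {ffun 'I_K -> V} := [ffun i => x (lift ord0 i)].
have x0 x : x \in rooted_tuples f v k -> x ord0 = v.
  by rewrite inE => /and4P [_ _ _ /forallP /(_ ord0) /implyP /(_ (eqxx _)) /eqP].
rewrite -(card_in_imset (f := behead_ffun)); last first.
  move=> x1 x2 /x0 x10 /x0 x20 e; apply/ffunP => i.
  case: (unliftP ord0 i) => [y ->|->]; last by rewrite x10 x20.
  by have := congr1 (fun x : {ffun 'I_K -> V} => x y) e; rewrite !ffunE.
apply: subset_leq_card; apply/subsetP => _ /imsetP [x xP ->].
have xv := x0 x xP.
move: xP; rewrite inE => /and4P [/injectiveP xi xJ _ _].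
have tx : tset k x = v |: tset K (behead_ffun x).
  apply/setP => z; apply/imsetP/setU1P => [[i _ ->]|[->|/imsetP [y _ ->]]].
  - case: (unliftP ord0 i) => [y ->|->]; last by left.
    by right; apply/imsetP; exists y; rewrite ?ffunE.
  - by exists ord0.
  - by exists (lift ord0 y); rewrite ?ffunE.
rewrite inE -tx xJ andbT; apply/andP; split.
  by apply/injectiveP => i j; rewrite !ffunE => /xi /lift_inj.
apply/imsetP => -[i _]; rewrite ffunE -xv => /xi /eqP.
by rewrite (negbTE (neq_lift _ _)).
Qed.

Lemma link_tuples_lower_bound (f : allocfun r k) (v : V) (z : R) :
  f \in F -> part v = f ord0 -> [set v] \in J -> Rle 0 z ->
  (forall j : 'I_k, 0 < j -> Rle z (INR (delta_F r n k F J j))) ->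
  Rle (pow z K) (INR #|link_tuples v|).
Proof.
move=> fF pv vJ z0 hz.
have hzf (j : 'I_k) : 0 < j -> Rle z (INR (delta_f r n k J f j)).
  by move=> /hz /Rle_trans; apply; apply/le_INR/leP/delta_F_le_delta_f.
apply: (Rle_trans _ _ _ (rooted_tuples_lower_bound pv vJ z0 hzf (ltnSn K))).
exact/le_INR/leP/rooted_tuples_le_link.
Qed.

Lemma max_reach_count_le (H : {set {set V}}) (eta : R) (v : V) (B : {set V}) :
  Rle 0 eta -> (forall w, w \in B -> ~~ reachable r n k H eta 1 v w) ->
  Rle (INR (\max_(w in B) reach_count r n k H 1 v w))
      (Rmult eta (pow (Rmult (INR r) (INR n)) K)).
Proof.
move=> eta0 hB; have [/cards0_eq -> | B0] := posnP #|B|.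
  rewrite big_set0; apply: Rmult_le_pos => //.
  by apply/pow_le/Rmult_le_pos; apply: pos_INR.
have [w /hB] := eq_bigmax_cond (fun w => reach_count r n k H 1 v w) B0.
rewrite /reachable cardsT card_prod !card_ord mul1n subn1 mult_INR.
by case: Rle_dec => // /Rnot_le_lt /Rlt_le + _ ->.
Qed.

Hypothesis allocF : is_allocation r k F.
Hypothesis complexJ : is_kcomplex r n k J.
Hypothesis partiteJ : is_PF_partite r n k F J.

(* PF-partiteness orders e along some f in F; a transposition moves v to the
   last slot, and F is closed under permuting slots. *)
Lemma top_edge_ordered_last (e : {set V}) (v : V) :
  e \in J -> #|e| = k -> v \in e ->
  exists2 f, f \in F &
    exists2 y, f_tuple r n k J f ord_max y & tset K y = e :\ v /\ f ord_max = part v.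
Proof.
move=> eJ ce ve.
have [|f fF [u [eu pu]]] := partiteJ eJ; first by rewrite ce leqnn.
have {}eu : e = [set u i | i : 'I_k].
  rewrite eu; apply/setP => x; apply/imsetP/imsetP => -[i _ ->]; exists i => //.
  by rewrite inE ce ltn_ord.
have {}pu i : part (u i) = f i by apply: pu; rewrite ce ltn_ord.
have uinj : injective u.
  have /imset_injP uinj : #|[set u i | i : 'I_k]| == #|'I_k| by rewrite -eu ce card_ord.
  by move=> i j; apply: uinj.
have /imsetP [p _ vp] : v \in [set u i | i : 'I_k] by rewrite -eu.
pose s := tperm p ord_max.
exists [ffun x => f (s x)]; first exact: allocation_perm_closed.
pose y : {ffun 'I_K -> V} := [ffun i => u (s (widen_ord (leqnSn K) i))].
have yinj : injective y.
  by move=> i j; rewrite !ffunE => /uinj /perm_inj /(congr1 val) /= /val_inj.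
have ye : tset K y = e :\ v.
  have cev : #|e :\ v| = K by move: ce; rewrite (cardsD1 v) ve => -[].
  apply/eqP; rewrite eqEcard cev card_tset // leqnn andbT.
  apply/subsetP => _ /imsetP [i _ ->]; rewrite in_setD1 eu ffunE mem_imset // andbT vp.
  apply: contraTneq (ltn_ord i) => /uinj /(congr1 s).
  by rewrite tpermK tpermL => /(congr1 val) /= ->; rewrite ltnn.
exists y; last by split; rewrite // ffunE tpermR vp pu.
rewrite /f_tuple ye; apply/andP; split; first (apply/andP; split).
- exact/injectiveP.
- by case: complexJ => _ /(_ _ _ eJ); apply; rewrite subsetDl.
- by apply/forallP => i; rewrite !ffunE pu; apply/eqP; congr (f (s _)); apply: val_inj.
Qed.

Lemma link_codegree_ge (v : V) t : t \in link_tuples v ->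
  delta_F r n k F J ord_max <=
  #|[set w : V | (part w == part v) && (w \notin tset K t) && (w |: tset K t \in J)]|.
Proof.
rewrite inE => /and3P [/injectiveP tinj vt eJ].
have ce : #|v |: tset K t| = k by rewrite cardsU1 vt card_tset.
have [f fF [y fy [ye fv]]] := top_edge_ordered_last eJ ce (setU11 _ _).
apply: leq_trans (delta_F_le_delta_f _ fF) _.
apply: leq_trans (delta_f_le_ext_deg fy) _.
by rewrite /ext_deg ye setU1K // fv.
Qed.

Lemma has_pm_top_edge (X : {set V}) :
  X \in J -> #|X| = k -> has_pm r n (top_edges r n k J) X.
Proof.
move=> XJ cX; apply/existsP; exists [set X].
by rewrite trivIset1 cover1 eqxx andbT sub1set inE XJ cX eqxx.
Qed.

(* A common link tuple spans a K-set S with S + v, S + w in J_k, i.e. a witness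
   of reachability; each S is spanned by at most K^K tuples. *)
Lemma common_link_le_reach (v w : V) :
  #|common_link_tuples v w| <= K ^ K * reach_count r n k (top_edges r n k J) 1 v w.
Proof.
rewrite /reach_count mul1n subn1 /=; set R := [set S : {set V} | _].
rewrite -sum1_card (partition_big (tset K) (mem R)) /=; last first.
  move=> t; rewrite !inE => /andP [/and3P [/injectiveP tinj vt vJ] /andP [wt wJ]].
  by rewrite card_tset // eqxx !has_pm_top_edge // cardsU1 ?vt ?wt card_tset.
rewrite mulnC -sum_nat_const; apply: leq_sum => S.
rewrite inE => /andP [/andP [/eqP cS _] _].
have <- : #|[pred t : {ffun 'I_K -> V} | t \in ffun_on (mem S)]| = K ^ K.
  by rewrite card_ffun_on cS card_ord.
rewrite sum1dep_card.
apply/subset_leq_card/subsetP => t; rewrite inE => /andP [_ /eqP <-].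
by apply/ffun_onP => x; apply/imsetP; exists x.
Qed.

Lemma link_degree_double_count (v : V) :
  #|link_tuples v| * delta_F r n k F J ord_max <=
  \sum_(w | part w == part v) #|common_link_tuples v w|.
Proof.
have -> : \sum_(w | part w == part v) #|common_link_tuples v w| =
    \sum_(w | part w == part v) \sum_(t in link_tuples v)
      ((w \notin tset K t) && (w |: tset K t \in J)).
  by apply: eq_bigr => w _; rewrite -card_sum_bool; apply: eq_card => t; rewrite !inE.
rewrite exchange_big /= -sum_nat_const; apply: leq_sum => t tv.
apply: leq_trans (link_codegree_ge tv) _; rewrite -card_sum_bool.
by apply/eq_leq/eq_card => w; rewrite !inE andbA.
Qed.

Lemma link_degree_split (v : V) (A : {set V}) :
  #|link_tuples v| * delta_F r n k F J ord_max <=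
  #|A| * #|link_tuples v| +
  n * (K ^ K * \max_(w in [set w | part w == part v] :\: A)
                 reach_count r n k (top_edges r n k J) 1 v w).
Proof.
set Mx := \max_(w in _) _.
apply: leq_trans (link_degree_double_count v) _.
rewrite (bigID (mem A)) /=; apply: leq_add.
  apply: (@leq_trans (\sum_(w | (part w == part v) && (w \in A)) #|link_tuples v|)).
    by apply: leq_sum => w _; apply/subset_leq_card/subsetP => t; rewrite inE => /andP [].
  rewrite sum_nat_cond_const leq_mul2r; apply/orP; right.
  by apply/subset_leq_card/subsetP => w; rewrite inE => /andP [].
apply: (@leq_trans (\sum_(w | (part w == part v) && (w \notin A)) (K ^ K * Mx))).
  apply: leq_sum => w /andP [pw wA]; apply: leq_trans (common_link_le_reach v w) _.
  by rewrite leq_mul2l; apply/orP; right; apply: leq_bigmax_cond; rewrite !inE wA pw.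
rewrite sum_nat_cond_const leq_mul2r; apply/orP; right.
apply: leq_trans (eq_leq (card_part (part v))).
by apply/subset_leq_card/subsetP => w; rewrite !inE => /andP [].
Qed.

Lemma link_degree_reach_bound (eta : R) (v : V) : Rle 0 eta ->
  Rle (Rmult (INR #|link_tuples v|) (INR (delta_F r n k F J ord_max)))
      (Rplus (Rmult (INR #|tildeN r n k (top_edges r n k J) eta 1 v
                            :&: [set w | part w == part v]|)
                    (INR #|link_tuples v|))
             (Rmult (INR n) (Rmult (pow (INR K) K)
                                   (Rmult eta (pow (Rmult (INR r) (INR n)) K))))).
Proof.
move=> eta0; set A := _ :&: _.
have /leP/le_INR := link_degree_split v A.
rewrite mult_INR plus_INR !mult_INR INR_expn => /Rle_trans; apply.
apply/Rplus_le_compat_l/Rmult_le_compat_l; first exact: pos_INR.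
apply/Rmult_le_compat_l; first by apply/pow_le/pos_INR.
apply: max_reach_count_le eta0 _ => w.
by rewrite !inE => /andP [wA pw]; apply: contra wA => reach; rewrite pw reach.
Qed.

End Complex.

End Vertices.

Theorem proposition4p1 :
  forall (zeta : R) (r k : nat),
    Rlt 0 zeta -> 0 < r -> 0 < k ->
    exists eta0 : R, Rlt 0 eta0 /\
    forall eta : R, Rlt 0 eta -> Rle eta eta0 ->
    exists n0 : nat, forall n : nat, n0 <= n ->
    forall (F : {set allocfun r k}) (J : {set {set vtx r n}}),
      is_allocation r k F ->
      (forall j : 'I_r, exists2 f, f \in F & exists i : 'I_k, f i = j) ->
      is_kcomplex r n k J ->
      is_PF_partite r n k F J ->
      (forall j : 'I_k,
         Rle (if nat_of_ord j == 0 then INR n else Rmult zeta (INR n))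
             (INR (delta_F r n k F J j))) ->
      forall (jlast : 'I_k), (nat_of_ord jlast).+1 = k ->
      forall (j : 'I_r) (v : vtx r n), part r n v = j ->
        Rle (Rminus (INR (delta_F r n k F J jlast)) (Rmult (sqrt eta) (INR n)))
            (INR #|tildeN r n k (top_edges r n k J) eta 1 v
                   :&: [set w : vtx r n | part r n w == j]|).
Proof.
move=> zeta r [//|K] zeta0 /ltP/lt_0_INR r0 _.
pose c := pow (Rdiv zeta (Rmult (INR r) (INR K.+1))) K.
have k0 : Rlt 0 (INR K.+1) by apply/lt_0_INR/ltP.
have c0 : Rlt 0 c by apply/pow_lt/Rdiv_lt_0_compat/Rmult_lt_0_compat.
exists (Rmult c c); split=> [|eta eta0 eta_le]; first exact: Rmult_lt_0_compat.
exists 0 => n _ F J allocF surjF complexJ partiteJ hdeg jlast /succn_inj jK _ v <-.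
have -> : jlast = ord_max by apply: val_inj.
have zn0 : Rlt 0 (Rmult zeta (INR n)).
  apply: Rmult_lt_0_compat => //; case: v => _ x.
  exact/lt_0_INR/ltP/(leq_ltn_trans _ (ltn_ord x)).
have [f fF /esym fv] := allocation_rooted allocF surjF (part r n v).
have vJ : [set v] \in J.
  apply: (singleton_edge _ fv).
  by apply: leq_trans (delta_F_le_delta_f _ _ fF); have /INR_le/leP := hdeg ord0.
have hz (j : 'I_K.+1) : 0 < j -> Rle (Rmult zeta (INR n)) (INR (delta_F r n K.+1 F J j)).
  by move=> j0; have := hdeg j; rewrite eqn0Ngt j0.
have links := link_tuples_lower_bound fF fv vJ (Rlt_le _ _ zn0) hz.
apply: sub_le_of_mul_le (link_degree_reach_bound allocF complexJ partiteJ v (Rlt_le _ _ eta0)) _.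
  exact: Rlt_le_trans (pow_lt _ _ zn0) links.
apply: (nonreachable_mass_le r0 k0 (pos_INR n) (Rlt_le _ _ eta0) _ links).
  by split; [apply/pow_le/pos_INR | apply/pow_incr; split; [apply: pos_INR | apply/le_INR/leP]].
rewrite -/c -(sqrt_square c); [exact: sqrt_le_1_alt | exact: Rlt_le].
Qed.
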